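(* For every $n$ there exists a dynamic graph on $n$ nodes (with integral initial loads) defined by an adaptive adversary such that no matching-based integral load balancing algorithm can reduce the maximal difference between loads in the graph below $n-1$, regardless of the running time; i.e., at every round $t$, $\max_{u,v}|w_t(u)-w_t(v)|\ge n-1$.
   Context: Integral load balancing: a fixed set of $n$ nodes with non-negative integer loads that must remain integers; the total load is preserved. The network is a dynamic graph, a sequence of connected graphs on the nodes, where the graph of each round may be chosen by an adaptive adversary after seeing everything that happened so far. In each round nodes may exchange information with all current neighbours; a matching-based algorithm is one in which, in each round, the pairs of nodes that exchange load form a matching of the current graph, and within each such pair the two nodes redistribute their combined load between them (as integers); nodes not in the matching keep their load. *)

From mathcomp Require Import all_boot all_order all_algebra.
Set Implicit Arguments. Unset Strict Implicit. Unset Printing Implicit Defensive.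

Definition loads (n : nat) := {ffun 'I_n -> nat}.

(* A matching is represented by a partner function p : 'I_n -> 'I_n that is
   an involution; p u = u means u is unmatched, otherwise {u, p u} is an edge
   of the matching. *)
Definition partner (n : nat) := {ffun 'I_n -> 'I_n}.

Definition connected_graph (n : nat) (g : rel 'I_n) : Prop :=
  (forall u v, g u v = g v u) /\ (forall u, ~~ g u u) /\ (forall u v, connect g u v).

Definition is_matching (n : nat) (g : rel 'I_n) (p : partner n) : Prop :=
  (forall u, p (p u) = u) /\ (forall u, p u != u -> g u (p u)).

Definition matching_step (n : nat) (g : rel 'I_n) (p : partner n)
    (w w' : loads n) : Prop :=
  is_matching g p /\
  (forall u, p u = u -> w' u = w u) /\
  (forall u, p u != u -> w' u + w' (p u) = w u + w (p u)).

Definition hist (n : nat) (w : nat -> loads n) (p : nat -> partner n) (t : nat)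
    : seq (loads n * partner n) :=
  [seq (w i, p i) | i <- iota 0 t].

Definition maxdiff (n : nat) (w : loads n) : nat :=
  \max_(u < n) \max_(v < n) `|w u - w v|%N.

From mathcomp Require Import all_boot all_order all_algebra.
From mathcomp Require Import zify.

Set Implicit Arguments.
Unset Strict Implicit.
Unset Printing Implicit Defensive.

(* The initial loads are 0, 1, ..., n-1 and the adversary always presents the
   path through the nodes sorted by current load.  Invariant: for every k, some
   k nodes carry total load at most 0 + 1 + ... + (k-1) = 'C(k, 2).  On the
   sorted path, load can cross the cut between the k lightest nodes and the rest
   only along the edge joining ranks k-1 and k.  If the matching avoids that
   edge, the k lightest nodes keep their total; otherwise the k-1 and the k+1
   lightest nodes keep theirs, and the lighter of the two matched nodes ends with
   at most the average of their loads, which by integrality is enough.  With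
   k = 1 some node has load 0; with k = n-1, against the preserved total
   'C(n, 2), the remaining node has load at least n-1. *)

Lemma sum_lighter_set (T : finType) (f : T -> nat) (X Y : {set T}) :
  #|X| = #|Y| -> {in X & Y, forall x y, f x <= f y} ->
  \sum_(x in X) f x <= \sum_(y in Y) f y.
Proof.
move=> eq_card lighter.
have [X0|X_gt0] := posnP #|X|; first by rewrite (cards0_eq X0) big_set0.
rewrite -(leq_pmul2l X_gt0) [in X in _ <= X]eq_card.
have -> : #|X| * \sum_(x in X) f x = \sum_(y in Y) \sum_(x in X) f x.
  by rewrite sum_nat_const eq_card.
have -> : #|Y| * \sum_(y in Y) f y = \sum_(y in Y) \sum_(x in X) f y.
  by rewrite big_distrr -eq_card; apply: eq_bigr => y _; rewrite sum_nat_const.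
by apply: leq_sum => y Yy; apply: leq_sum => x Xx; apply: lighter.
Qed.

Lemma matching_step_sum n g (p : partner n) (w w' : loads n) (A : {set 'I_n}) :
  matching_step g p w w' -> {in A, forall u, p u \in A} ->
  \sum_(u in A) w' u = \sum_(u in A) w u.
Proof.
case=> [[p_invol _] [unmatched matched]] A_closed.
have p_in u : (p u \in A) = (u \in A).
  by apply/idP/idP => [/A_closed|/A_closed //]; rewrite p_invol.
have sum_p (f : 'I_n -> nat) : \sum_(u in A) f (p u) = \sum_(u in A) f u.
  by rewrite [RHS](reindex_inj (can_inj p_invol)); apply: eq_bigl => u; rewrite p_in.
apply: double_inj; rewrite -!addnn -{2}(sum_p w') -{2}(sum_p w) -!big_split.
apply: eq_bigr => u _.
have [fixed|/matched //] := eqVneq (p u) u.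
by rewrite fixed !unmatched.
Qed.

Lemma matching_step_total n g (p : partner n) (w w' : loads n) :
  matching_step g p w w' -> \sum_u w' u = \sum_u w u.
Proof.
move/matching_step_sum => /(_ [set: 'I_n] (fun u _ => in_setT (p u))).
by rewrite !(eq_bigl _ _ (@in_setT _)).
Qed.

Section SortedPath.
Variables (n : nat) (w : loads n).

Definition sorted_nodes : seq 'I_n := sort (fun u v => w u <= w v) (enum 'I_n).
Definition rank (u : 'I_n) : nat := index u sorted_nodes.
Definition sorted_path : rel 'I_n :=
  fun u v => ((rank u).+1 == rank v) || ((rank v).+1 == rank u).
Definition lowest (k : nat) : {set 'I_n} := [set u | rank u < k].

Lemma sorted_nodes_uniq : uniq sorted_nodes.
Proof. by rewrite sort_uniq enum_uniq. Qed.

Lemma size_sorted_nodes : size sorted_nodes = n.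
Proof. by rewrite size_sort size_enum_ord. Qed.

Lemma mem_sorted_nodes u : u \in sorted_nodes.
Proof. by rewrite mem_sort mem_enum. Qed.

Lemma rank_lt u : rank u < n.
Proof. by rewrite -size_sorted_nodes index_mem mem_sorted_nodes. Qed.

Lemma nth_rank x0 u : nth x0 sorted_nodes (rank u) = u.
Proof. by rewrite nth_index ?mem_sorted_nodes. Qed.

Lemma rank_nth x0 i : i < n -> rank (nth x0 sorted_nodes i) = i.
Proof. by move=> lt_in; rewrite /rank index_uniq ?sorted_nodes_uniq ?size_sorted_nodes. Qed.

Lemma rank_inj : injective rank.
Proof. by move=> u v eq_uv; rewrite -(nth_rank u u) eq_uv nth_rank. Qed.

Lemma load_rank_mono u v : rank u <= rank v -> w u <= w v.
Proof.
pose le_load a b := w a <= w b.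
have le_load_trans : transitive le_load by move=> ???; apply: leq_trans.
move=> le_uv; rewrite -(nth_rank u u) -(nth_rank u v).
apply: (sorted_leq_nth le_load_trans (fun a => leqnn (w a)));
  rewrite ?inE ?size_sorted_nodes ?rank_lt //.
exact: (sort_sorted (fun a b => leq_total (w a) (w b))).
Qed.

Lemma sorted_path_connected : connected_graph sorted_path.
Proof.
have sym_path u v : sorted_path u v = sorted_path v u by rewrite /sorted_path orbC.
split; first exact: sym_path.
split=> [u|u v]; first by rewrite /sorted_path orbb eqn_leq ltnn.
pose first := nth u sorted_nodes 0.
have from_first i : i < n -> connect sorted_path first (nth u sorted_nodes i).
  elim: i => [//|i IHi] lt_in; apply: connect_trans (IHi (ltnW lt_in)) (connect1 _).
  by rewrite /sorted_path !rank_nth ?eqxx // ltnW.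
apply: (@connect_trans _ _ first).
  by rewrite (sym_connect_sym sym_path) -(nth_rank u u) from_first ?rank_lt.
by rewrite -(nth_rank u v) from_first ?rank_lt.
Qed.

Lemma card_lowest k : k <= n -> #|lowest k| = k.
Proof.
move=> le_kn; have -> : lowest k = [set u in take k sorted_nodes].
  by apply/setP => u; rewrite !inE in_take ?mem_sorted_nodes.
by rewrite cardsE (card_uniqP (take_uniq k sorted_nodes_uniq)) size_takel ?size_sorted_nodes.
Qed.

Lemma lowestS u : lowest (rank u).+1 = u |: lowest (rank u).
Proof.
apply/setP => v; rewrite !inE ltnS leq_eqVlt.
by congr (_ || _); apply/eqP/eqP => [/rank_inj|->].
Qed.

Lemma sum_lowest_min k (A : {set 'I_n}) : k <= n -> #|A| = k ->
  \sum_(u in lowest k) w u <= \sum_(u in A) w u.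
Proof.
move=> le_kn card_A.
rewrite (big_setID A) [X in _ <= X](big_setID (lowest k)) setIC leq_add2l.
apply: sum_lighter_set => [|u v]; last first.
  rewrite !inE -leqNgt => /andP[_ u_low] /andP[v_high _].
  exact/load_rank_mono/ltnW/(leq_trans u_low v_high).
apply: (@addnI #|lowest k :&: A|).
by rewrite cardsID setIC cardsID card_lowest ?card_A.
Qed.

End SortedPath.

Section SortedPathMatching.
Variables (n : nat) (w : loads n) (p : partner n).
Hypothesis p_matching : is_matching (sorted_path w) p.

Lemma rank_partner u : p u != u ->
  rank w (p u) = (rank w u).+1 \/ rank w u = (rank w (p u)).+1.
Proof. by case: p_matching => _ /[apply] /orP[] /eqP ->; [left|right]. Qed.

Lemma lowest_closed k :
  (forall u, (rank w u).+1 = k -> rank w (p u) != k) ->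
  {in lowest w k, forall u, p u \in lowest w k}.
Proof.
move=> no_crossing u; rewrite !inE => u_low.
have [->//|matched] := eqVneq (p u) u.
have [up|down] := rank_partner matched; last by rewrite down in u_low; lia.
have [at_cut|off_cut] := eqVneq (rank w u).+1 k.
  by move: (no_crossing u at_cut); rewrite up at_cut eqxx.
by rewrite up; lia.
Qed.

End SortedPathMatching.

Definition light_subsets n (w : loads n) : Prop :=
  forall k, k <= n -> exists2 A : {set 'I_n}, #|A| = k & \sum_(u in A) w u <= 'C(k, 2).

Lemma light_lowest n (w : loads n) k : light_subsets w -> k <= n ->
  \sum_(u in lowest w k) w u <= 'C(k, 2).
Proof.
move=> light le_kn; have [A card_A sum_A] := light k le_kn.
exact: leq_trans (sum_lowest_min w le_kn card_A) sum_A.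
Qed.

Lemma bin2_add_min s a b j : s <= 'C(j, 2) -> s + (a + b) <= 'C(j.+2, 2) ->
  s + minn a b <= 'C(j.+1, 2).
Proof. by rewrite !binS bin0 !bin1; lia. Qed.

Section LightStep.
Variables (n : nat) (w w' : loads n) (p : partner n).
Hypotheses (light : light_subsets w) (step : matching_step (sorted_path w) p w w').

Lemma light_across u : rank w (p u) = (rank w u).+1 ->
  exists2 A : {set 'I_n}, #|A| = (rank w u).+1 &
    \sum_(x in A) w' x <= 'C((rank w u).+1, 2).
Proof.
have [[p_invol _] _] := step.
set j := rank w u; set v := p u => rank_v.
have matched : v != u by apply: contra_eq_neq rank_v => ->; rewrite (ltn_eqF (ltnSn j)).
have le_j2n : j.+2 <= n by rewrite -rank_v rank_lt.
have low_j_closed : {in lowest w j, forall x, p x \in lowest w j}.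
  apply: (lowest_closed step.1) => x rank_x; apply: contra_eq_neq rank_x => /rank_inj px_u.
  by rewrite -(p_invol x) px_u rank_v; lia.
have low_j2_closed : {in lowest w j.+2, forall x, p x \in lowest w j.+2}.
  apply: (lowest_closed step.1) => x /eqP; rewrite -rank_v eqSS => /eqP /rank_inj ->.
  by rewrite p_invol rank_v; lia.
have lowest_j2 : lowest w j.+2 = v |: (u |: lowest w j).
  by rewrite -rank_v lowestS rank_v lowestS.
have u_low : u \notin lowest w j by rewrite inE ltnn.
have v_low : v \notin u |: lowest w j by rewrite !inE negb_or matched rank_v ltnNge leqnSn.
have [x [x_low w'x]] : exists x, x \notin lowest w j /\ w' x = minn (w' u) (w' v).
  by case: leqP => _; [exists u | exists v]; rewrite ?inE ?rank_v ?ltnn ?ltnNge ?leqnSn.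
exists (x |: lowest w j); first by rewrite cardsU1 x_low card_lowest // ltnW // ltnW.
rewrite big_setU1 //= w'x (matching_step_sum step low_j_closed) addnC.
apply: bin2_add_min; first exact: light_lowest (ltnW (ltnW le_j2n)).
have := light_lowest light le_j2n.
by rewrite lowest_j2 !big_setU1 //= (step.2.2 u matched) -/v; lia.
Qed.

Lemma light_subsets_step : light_subsets w'.
Proof.
move=> k le_kn.
pose crossing u := ((rank w u).+1 == k) && (rank w (p u) == k).
have [u /andP[/eqP <- /eqP rank_pu]|no_crossing] := pickP crossing.
  by apply: light_across; rewrite rank_pu.
exists (lowest w k); first exact: card_lowest.
rewrite (matching_step_sum step); first exact: light_lowest.
apply: (lowest_closed step.1) => u rank_u.
by move: (no_crossing u); rewrite /crossing rank_u eqxx => /negbT.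
Qed.

End LightStep.

Lemma light_subsets_ord n : light_subsets [ffun u : 'I_n => val u].
Proof.
move=> k le_kn.
have prefix (F : nat -> nat) : \sum_(u in [set u : 'I_n | u < k]) F u = \sum_(i < k) F i.
  by rewrite (big_ord_widen _ F le_kn); apply: eq_bigl => u; rewrite inE.
exists [set u : 'I_n | u < k].
  by rewrite -sum1_card (prefix (fun=> 1)) sum1_card card_ord.
under eq_bigr do rewrite ffunE.
by rewrite (prefix id) -bin2_sum big_mkord.
Qed.

Lemma leq_maxdiff n (w : loads n) u v : `|w u - w v|%N <= maxdiff w.
Proof.
apply: leq_trans (leq_bigmax (F := fun v => `|w u - w v|%N) v) _.
exact: (leq_bigmax (F := fun u => \max_(v < n) `|w u - w v|%N) u).
Qed.

Lemma light_maxdiff n (w : loads n) :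
  light_subsets w -> \sum_u w u = 'C(n, 2) -> n - 1 <= maxdiff w.
Proof.
case: n w => [//|m] w light total; rewrite subn1.
have [_ /eqP/cards1P[a ->]] := light 1 isT.
rewrite big_set1 leqn0 => /eqP w_a.
have [A card_A sum_A] := light m (leqnSn m).
have /cards1P[b A_compl] : #|~: A| == 1.
  by rewrite -(eqn_add2l #|A|) cardsC card_ord card_A addn1.
have split_total : \sum_(u in A) w u + w b = 'C(m.+1, 2).
  rewrite -total [RHS](bigID (mem A)) /=; congr (_ + _).
  by rewrite -(big_set1 addn b w) -A_compl; apply: eq_bigl => u; rewrite inE.
apply: leq_trans _ (leq_maxdiff w b a).
by rewrite w_a distn0; move: split_total sum_A; rewrite binS bin1; lia.
Qed.

Theorem theorem2 :
  forall n : nat,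
  exists (w0 : loads n)
         (adv : seq (loads n * partner n) -> loads n -> rel 'I_n),
    (forall h w, connected_graph (adv h w)) /\
    (forall (w : nat -> loads n) (p : nat -> partner n),
        w 0 = w0 ->
        (forall t, matching_step (adv (hist w p t) (w t)) (p t) (w t) (w t.+1)) ->
        forall t, n - 1 <= maxdiff (w t)).
Proof.
move=> n; exists [ffun u : 'I_n => val u], (fun _ w => sorted_path w).
split=> [_ w|w p w_0 steps t]; first exact: sorted_path_connected.
apply: light_maxdiff.
  elim: t => [|t IHt]; first by rewrite w_0; apply: light_subsets_ord.
  exact: light_subsets_step IHt (steps t).
elim: t => [|t IHt]; last by rewrite (matching_step_total (steps t)).
rewrite w_0 -bin2_sum big_mkord; apply: eq_bigr => u _; exact: ffunE.
Qed.
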